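(* Let $\alpha\in\mathbb{N}$, let $n\in\mathbb{N}$ with $3\nmid n$ and $n>6\alpha+3$, and let $\mathbb{S}=\langle 6,6\alpha+3,n\rangle$, with Betti elements $\beta_1=\beta_2=12\alpha+6$ and $\beta_3=3n$. Then, with respect to $(6,6\alpha+3,n)$, the factorizations of $\beta_1=\beta_2$ are exactly $(2\alpha+1,0,0)$ and $(0,2,0)$, and the factorizations of $\beta_3$ are exactly $(0,0,3)$ and $\left(\frac{n-k(2\alpha+1)}{2},k,0\right)$ for $k\in\mathbb{N}$ with $k\le\frac{n}{2\alpha+1}$ and $2\mid n-k(2\alpha+1)$.
   Context: $\mathbb{N}=\{0,1,2,\dots\}$. $\langle a_1,\dots,a_e\rangle$ is the set of $\mathbb{N}$-linear combinations of $a_1,\dots,a_e$. A factorization of $a\in\langle a_1,a_2,a_3\rangle$ is a tuple $(\eta_1,\eta_2,\eta_3)\in\mathbb{N}^3$ with $\eta_1a_1+\eta_2a_2+\eta_3a_3=a$. *)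

From mathcomp Require Import all_boot.

Definition is_factorization (a1 a2 a3 a : nat) (e : nat * nat * nat) : Prop :=
  let: (e1, e2, e3) := e in e1 * a1 + e2 * a2 + e3 * a3 = a.

From mathcomp Require Import all_boot zify.

(* The generators 6 and 6a+3 and both Betti elements are multiples of 3 while
   n is not, so in any factorization the coefficient of n is a multiple of 3;
   the size of the element then forces it to be 0 (for 12a+6 < 2n) or 0 or 3
   (for 3n).  With that coefficient 0, dividing by 3 leaves the two-generator
   equation 2 e1 + (2a+1) e2 = m, solved by reading e1 off e2. *)

Section CommonFactor.
Context {p a1 a2 a3 m : nat}.

Lemma is_factorization_scale {e1 e2} : 0 < p ->
  is_factorization (p * a1) (p * a2) a3 (p * m) (e1, e2, 0) <->
  e1 * a1 + e2 * a2 = m.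
Proof.
move=> p_gt0 /=; rewrite mul0n addn0 mulnCA [e2 * _]mulnCA -mulnDr.
by split=> [/eqP | ->]; rewrite ?eqn_pmul2l // => /eqP.
Qed.

Lemma is_factorization_third_mul {e1 e2 e3} : prime p -> ~~ (p %| a3) ->
  is_factorization (p * a1) (p * a2) a3 (p * m) (e1, e2, e3) ->
  exists2 q, e3 = p * q & q * a3 <= m.
Proof.
move=> p_pr p_ndvd_a3 /= fact.
have /dvdnP [q e3E] : p %| e3.
  have : p %| e1 * (p * a1) + e2 * (p * a2) + e3 * a3 by rewrite fact dvdn_mulr.
  rewrite dvdn_addr; last by rewrite dvdn_add // dvdn_mull // dvdn_mulr.
  by rewrite Euclid_dvdM // (negbTE p_ndvd_a3) orbF.
exists q; first by rewrite mulnC.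
have p_gt0 := prime_gt0 p_pr.
have : e3 * a3 <= p * m by rewrite -fact leq_addl.
by rewrite e3E mulnAC mulnC leq_pmul2l.
Qed.

End CommonFactor.

Lemma two_generator_factorizationP d b m e1 e2 : 0 < d ->
  e1 * d + e2 * b = m <->
  [/\ e2 * b <= m, d %| m - e2 * b & e1 = (m - e2 * b) %/ d].
Proof.
move=> d_gt0; split=> [<- | [le_m dvd_d ->]].
  by rewrite addnK leq_addl dvdn_mull // mulnK.
by rewrite divnK // subnK.
Qed.

Lemma odd_double_factorizationP b e1 e2 : odd b ->
  e1 * 2 + e2 * b = 2 * b <-> (e1, e2) = (b, 0) \/ (e1, e2) = (0, 2).
Proof.
move=> b_odd; split=> [fact | [[-> ->] | [-> ->]]]; [| lia | lia].
have b_gt0 := odd_gt0 b_odd.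
have : e2 <= 2 by nia.
case: e2 fact => [|[|[|e2]]] fact // _.
- by left; congr pair; lia.
- lia. (* zify knows [odd]: e1 * 2 = b contradicts [odd b] *)
- by right; congr pair; lia.
Qed.

Theorem theorem9 (alpha n : nat) :
  ~~ (3 %| n) -> 6 * alpha + 3 < n ->
  (forall e : nat * nat * nat,
     is_factorization 6 (6 * alpha + 3) n (12 * alpha + 6) e <->
     (e = (2 * alpha + 1, 0, 0) \/ e = (0, 2, 0))) /\
  (forall e : nat * nat * nat,
     is_factorization 6 (6 * alpha + 3) n (3 * n) e <->
     (e = (0, 0, 3) \/
      exists k : nat, k * (2 * alpha + 1) <= n /\
        2 %| n - k * (2 * alpha + 1) /\
        e = ((n - k * (2 * alpha + 1)) %/ 2, k, 0))).
Proof.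
move=> n_ndvd3; have prime3 : prime 3 by [].
have b_odd : odd (2 * alpha + 1) by rewrite oddD oddM.
have -> : 12 * alpha + 6 = 3 * (2 * (2 * alpha + 1)) by lia.
have -> : 6 * alpha + 3 = 3 * (2 * alpha + 1) by lia.
rewrite -[6]/(3 * 2); move: (2 * alpha + 1) b_odd => b b_odd lt_n.
split=> -[[e1 e2] e3]; split.
- move=> fact; have [q e3E le_qn] := is_factorization_third_mul prime3 n_ndvd3 fact.
  have q0 : q = 0 by nia.
  rewrite e3E q0 in fact *.
  move/is_factorization_scale/odd_double_factorizationP: fact => /(_ b_odd isT).
  by case=> -[-> ->]; [left | right].
- by case=> -[-> -> ->] /=; lia.
- move=> fact; have [q e3E le_qn] := is_factorization_third_mul prime3 n_ndvd3 fact.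
  have [q0 | q1] : q = 0 \/ q = 1 by nia.
  + rewrite e3E q0 in fact *; right; exists e2.
    move/is_factorization_scale/two_generator_factorizationP: fact.
    by move=> /(_ isT isT) [le_n dvd_2 ->].
  + have b_gt0 := odd_gt0 b_odd.
    rewrite e3E q1 /= in fact *.
    by left; congr (_, _, _); nia.
- case=> [[-> -> ->] | [k [le_n [dvd_2 [-> -> ->]]]]]; first by rewrite /=; lia.
  by apply/is_factorization_scale/two_generator_factorizationP.
Qed.
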